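(* Let $\langle A,\to\rangle$ be a conditional algebra and $Y$ a closed subset of the Stone space $\mathrm{Ul}(A)$. Then $\theta(Y)=\{(a,b)\in A^2: Y\cap\varphi(a)=Y\cap\varphi(b)\}$ is a congruence of $\langle A,\to\rangle$ if and only if $Y$ is a $T_A$-closed set.
   Context: A conditional algebra is $\langle A,\to\rangle$ with $A$ a Boolean algebra and $\to$ binary with $a\to1=1$, $(a\to b)\wedge(a\to c)=a\to(b\wedge c)$, $(a\vee b)\to c\le(a\to c)\wedge(b\to c)$. $\mathrm{Ul}(A)$ is the Stone space of ultrafilters, $\varphi(a)=\{u:a\in u\}$; closed sets are $\varphi(F)=\{u:F\subseteq u\}$ for filters $F$ (including $F=A$). $D^{\to}_u(F)=\{b:\exists a\in F,\ a\to b\in u\}$; $T_A(u,Z,v)$ iff there is a filter $F$ with $Z=\varphi(F)$ and $D^{\to}_u(F)\subseteq v$. For $x,y\in\mathrm{Ul}(A)$, $\mathbf{C}(x,y)$ is the set of closed $Z$ with $T_A(x,Z,y)$. A closed set $Y$ is $T_A$-closed if for all $x,y$: if $x\in Y$ and $Z$ is a minimal element (w.r.t. inclusion) of $\mathbf{C}(x,y)$, then $Z\subseteq Y$ and $y\in Y$. *)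

(* Boolean algebras as complemented distributive lattices
   with top and bottom (ctbDistrLatticeType). *)
From HB Require Import structures.
From mathcomp Require Import all_boot all_order.
Set Implicit Arguments. Unset Strict Implicit. Unset Printing Implicit Defensive.
Import Order.TTheory.
Local Open Scope order_scope.

Section CondAlg.
Context {disp : Order.disp_t} {A : ctbDistrLatticeType disp}.

Definition conditional_algebra (imp : A -> A -> A) : Prop :=
  [/\ forall a, imp a \top = \top,
      forall a b c, imp a b `&` imp a c = imp a (b `&` c)
    & forall a b c, imp (a `|` b) c <= imp a c `&` imp b c].

(* Filters (the improper filter F = A is allowed). *)
Definition is_filter (F : A -> Prop) : Prop :=
  [/\ F \top,
      forall a b, F a -> a <= b -> F b
    & forall a b, F a -> F b -> F (a `&` b)].

Definition proper_filter (F : A -> Prop) : Prop := is_filter F /\ ~ F \bot.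

Definition ultrafilter (u : A -> Prop) : Prop :=
  proper_filter u /\
  forall G : A -> Prop, proper_filter G -> (forall a, u a -> G a) ->
    forall a, G a -> u a.

Definition Ul : Type := {u : A -> Prop | ultrafilter u}.

Definition Uset := Ul -> Prop.

Definition subU (X Y : Uset) : Prop := forall u, X u -> Y u.
Definition eqU (X Y : Uset) : Prop := forall u, X u <-> Y u.

Definition phi (a : A) : Uset := fun u => proj1_sig u a.
Definition phiF (F : A -> Prop) : Uset :=
  fun u => forall a, F a -> proj1_sig u a.

Definition closedU (Z : Uset) : Prop :=
  exists F, is_filter F /\ eqU Z (phiF F).

Definition Dimp (imp : A -> A -> A) (u : Ul) (F : A -> Prop) : A -> Prop :=
  fun b => exists2 a, F a & proj1_sig u (imp a b).

Definition TA (imp : A -> A -> A) (u : Ul) (Z : Uset) (v : Ul) : Prop :=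
  exists F, [/\ is_filter F, eqU Z (phiF F)
              & forall b, Dimp imp u F b -> proj1_sig v b].

Definition Cset (imp : A -> A -> A) (x y : Ul) (Z : Uset) : Prop :=
  closedU Z /\ TA imp x Z y.

Definition minimal_C (imp : A -> A -> A) (x y : Ul) (Z : Uset) : Prop :=
  Cset imp x y Z /\
  forall Z', Cset imp x y Z' -> subU Z' Z -> eqU Z' Z.

Definition TA_closed (imp : A -> A -> A) (Y : Uset) : Prop :=
  closedU Y /\
  forall (x y : Ul) (Z : Uset), Y x -> minimal_C imp x y Z ->
    subU Z Y /\ Y y.

Definition theta (Y : Uset) (a b : A) : Prop :=
  eqU (fun u => Y u /\ phi a u) (fun u => Y u /\ phi b u).

(* Congruence of <A, imp>: an equivalence relation compatible with the
   Boolean operations (meet, join, complement; constants trivially) and imp. *)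
Definition congruence (imp : A -> A -> A) (R : A -> A -> Prop) : Prop :=
  (forall a, R a a) /\
  (forall a b, R a b -> R b a) /\
  (forall a b c, R a b -> R b c -> R a c) /\
  (forall a b c d, R a b -> R c d -> R (a `&` c) (b `&` d)) /\
  (forall a b c d, R a b -> R c d -> R (a `|` c) (b `|` d)) /\
  (forall a b, R a b -> R (~` a) (~` b)) /\
  (forall a b c d, R a b -> R c d -> R (imp a c) (imp b d)).

End CondAlg.

(* theta(Y) relates a and b when they belong to the same ultrafilters of Y,
   so it always respects the Boolean operations; only [imp] is at stake.
   If theta(Y) respects [imp] and Y = phi(G), then conjoining g in G to the
   antecedent of [imp] does not change its truth at points of Y. Hence
   adjoining G to a filter presenting a minimal Z in C(x, y) gives a smaller
   member of C(x, y), which forces Z <= Y; and [imp \top g = \top] puts y in Y.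
   Conversely, if [imp b c] fails at x in Y, the filter D(x, up b) extends to
   an ultrafilter y omitting c, and Zorn gives a filter M containing b,
   maximal with D(x, M) <= y. Then phi(M) is minimal in C(x, y), so
   T_A-closedness yields phi(M) <= Y and y in Y, which is what transports
   [imp] along theta(Y) in either argument. *)

From mathcomp Require Import all_boot all_order.
From mathcomp Require Import boolp classical_sets.
Import Order.Theory.

Set Implicit Arguments.
Unset Strict Implicit.

Local Open Scope classical_set_scope.
Local Open Scope order_scope.

Lemma ex_maximal_above (T : Type) (Q : set T -> Prop) (X0 : set T) :
  Q X0 ->
  (forall C : set (set T), C `<=` Q -> total_on C subset -> C !=set0 ->
     Q (\bigcup_(X in C) X)) ->
  exists M, [/\ Q M, X0 `<=` M & forall N, Q N -> M `<=` N -> N `<=` M].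
Proof.
move=> QX0 Qchain.
pose S := {X : set T | Q X /\ X0 `<=` X}.
pose R (s t : S) := `[< sval s `<=` sval t >].
have S0 : S := exist _ X0 (conj QX0 (@subset_refl _ X0)).
have [||Ch Chtot|[M [QM X0M]] Mmax] := @ZL_preorder S S0 R.
- by move=> s; apply/asboolP.
- move=> r s t /asboolP rs /asboolP st.
  by apply/asboolP; exact: subset_trans st.
- have [[s Chs]|Ch0] := pselect (Ch !=set0); last first.
    by exists S0 => t Cht; exfalso; apply: Ch0; exists t.
  pose C := [set sval s | s in Ch].
  have QU : Q (\bigcup_(X in C) X).
    apply: Qchain; last by exists (sval s), s.
    + by move=> _ [t _ <-]; case: (svalP t).
    + move=> _ _ [t Cht <-] [t' Cht' <-].
      by case: (Chtot t t' Cht Cht') => /asboolP; [left|right].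
  have X0U : X0 `<=` \bigcup_(X in C) X.
    by move=> e X0e; exists (sval s); [exists s|case: (svalP s) => _; apply].
  exists (exist _ (\bigcup_(X in C) X) (conj QU X0U) : S) => t Cht.
  by apply/asboolP => e te; exists (sval t) => //; exists t.
- exists M; split => // N QN MN.
  have X0N : X0 `<=` N := subset_trans X0M MN.
  by have /asboolP := Mmax (exist _ N (conj QN X0N) : S) (asboolT MN).
Qed.

Section Filters.
Context {disp : Order.disp_t} {A : ctbDistrLatticeType disp}.
Implicit Types (F G : set A) (a b c : A).

Definition principal_filter c : set A := fun e => c <= e.

Definition filter_join F G : set A :=
  fun e => exists f g, [/\ F f, G g & f `&` g <= e].

Lemma principal_filter_filter c : is_filter (principal_filter c).
Proof.
split=> [|a b|a b]; rewrite /principal_filter; first exact: lex1.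
  by move=> ca /(le_trans ca).
by move=> ca cb; rewrite lexI ca cb.
Qed.

Lemma filter_join_filter F G :
  is_filter F -> is_filter G -> is_filter (filter_join F G).
Proof.
move=> [FT _ FI] [GT _ GI]; split.
- by exists \top, \top; split.
- move=> a b [f [g [Ff Gg fga]]] ab.
  by exists f, g; split=> //; exact: le_trans ab.
- move=> a b [f [g [Ff Gg fga]]] [f' [g' [Ff' Gg' fgb]]].
  exists (f `&` f'), (g `&` g'); split; [exact: FI|exact: GI|].
  rewrite lexI meetACA (le_trans (leIl _ _) fga).
  by rewrite (le_trans (leIr _ _) fgb).
Qed.

Lemma filter_join_l F G a : is_filter G -> F a -> filter_join F G a.
Proof. by move=> [GT _ _] Fa; exists a, \top; split; rewrite ?meetx1. Qed.

Lemma filter_join_r F G a : is_filter F -> G a -> filter_join F G a.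
Proof. by move=> [FT _ _] Ga; exists \top, a; split; rewrite ?meet1x. Qed.

Lemma bigcup_chain_filter (C : set (set A)) :
  C `<=` is_filter -> total_on C subset -> C !=set0 ->
  is_filter (\bigcup_(X in C) X).
Proof.
move=> Cf Ctot [X0 CX0]; split.
- by exists X0 => //; case: (Cf _ CX0).
- move=> a b [X CX Xa] ab; exists X => //.
  by case: (Cf _ CX) => _ Xup _; exact: Xup ab.
- move=> a b [X CX Xa] [X' CX' X'b].
  have [XX'|X'X] := Ctot X X' CX CX'.
    exists X' => //; case: (Cf _ CX') => _ _ X'I.
    by apply: X'I => //; exact: XX'.
  exists X => //; case: (Cf _ CX) => _ _ XI.
  by apply: XI => //; exact: X'X.
Qed.

Lemma proper_filter_join_compl F a :
  is_filter F -> ~ F a ->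
  proper_filter (filter_join F (principal_filter (~` a))).
Proof.
move=> fF nFa; split.
  by apply: filter_join_filter => //; exact: principal_filter_filter.
move=> [f [g [Ff ag fg0]]]; apply: nFa.
case: fF => _ Fup _; apply: (Fup f) => //.
by rewrite -[a]complK -disj_leC -lex0 (le_trans _ fg0) // leI2.
Qed.

End Filters.

Section Ultrafilters.
Context {disp : Order.disp_t} {A : ctbDistrLatticeType disp}.
Implicit Types (F G : set A) (a b : A).

Section Point.
Variable u : @Ul disp A.

Lemma phi_top : phi \top u.
Proof. by case: (svalP u) => [[[]]]. Qed.

Lemma phi_le a b : a <= b -> phi a u -> phi b u.
Proof. by case: (svalP u) => [[[_ up _] _] _] ab /up; apply. Qed.

Lemma phi_bot : ~ phi \bot u.
Proof. by case: (svalP u) => [[]]. Qed.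

Lemma phiI a b : phi (a `&` b) u <-> phi a u /\ phi b u.
Proof.
split=> [uab|[ua ub]]; first by split; apply: phi_le uab; rewrite ?leIl ?leIr.
by case: (svalP u) => [[[_ _ uI] _] _]; exact: uI.
Qed.

Lemma phiC a : phi (~` a) u <-> ~ phi a u.
Proof.
split=> [una ua|nua]; first by apply: phi_bot; rewrite -(meetxC a); exact/phiI.
case: (svalP u) => [[fu _] umax].
apply: (umax _ (proper_filter_join_compl fu nua)) => [b|].
  by apply: filter_join_l; exact: principal_filter_filter.
by apply: filter_join_r fu _; rewrite /principal_filter.
Qed.

Lemma phiU a b : phi (a `|` b) u <-> phi a u \/ phi b u.
Proof.
split=> [uab|]; last by case; apply: phi_le; rewrite ?leUl ?leUr.
apply: contrapT => /not_orP[nua nub]; apply: (proj1 (phiC (a `|` b)) _ uab).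
by rewrite complU; apply/phiI; split; exact/phiC.
Qed.

End Point.

Lemma ultrafilter_extension F :
  proper_filter F -> exists u : @Ul disp A, phiF F u.
Proof.
move=> pF; have [|M [[fM nM0] FM Mmax]] := ex_maximal_above pF.
  move=> C Cp Ctot Cne; split.
    by apply: bigcup_chain_filter => // X /Cp [].
  by case=> X /Cp [].
have uM : ultrafilter M by split=> // G pG MG; exact: Mmax.
by exists (exist _ M uM).
Qed.

Lemma ultrafilter_separation F a :
  is_filter F -> ~ F a -> exists2 u : @Ul disp A, phiF F u & ~ phi a u.
Proof.
move=> fF nFa.
have [u Fu] := ultrafilter_extension (proper_filter_join_compl fF nFa).
exists u => [b Fb|].
  by apply: Fu; apply: filter_join_l => //; exact: principal_filter_filter.
by apply/phiC; apply: Fu; apply: filter_join_r => //; rewrite /principal_filter.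
Qed.

Lemma phiF_sub_phi F a : is_filter F -> subU (phiF F) (phi a) -> F a.
Proof.
move=> fF Fa; apply: contrapT => nFa.
by have [u /Fa ua] := ultrafilter_separation fF nFa.
Qed.

Lemma subU_phiF F G : is_filter G -> subU (phiF G) (phiF F) -> F `<=` G.
Proof. by move=> fG GF a Fa; apply: phiF_sub_phi => // u /GF; apply. Qed.

End Ultrafilters.

Section Theta.
Context {disp : Order.disp_t} {A : ctbDistrLatticeType disp}.
Variable Y : @Uset disp A.
Implicit Types (a b c d : A).

Lemma thetaP a b : theta Y a b <-> forall u, Y u -> (phi a u <-> phi b u).
Proof.
split=> ab u; last by split=> -[Yu]; rewrite (ab u Yu).
move=> Yu; split=> [ua|ub]; first by case: (proj1 (ab u) (conj Yu ua)).
by case: (proj2 (ab u) (conj Yu ub)).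
Qed.

Lemma theta_refl a : theta Y a a.
Proof. by []. Qed.

Lemma theta_sym a b : theta Y a b -> theta Y b a.
Proof. by move=> ab u; split=> /ab. Qed.

Lemma theta_trans a b c : theta Y a b -> theta Y b c -> theta Y a c.
Proof. by move=> ab bc u; split=> [/ab/bc|/bc/ab]. Qed.

Lemma theta_meet a b c d :
  theta Y a b -> theta Y c d -> theta Y (a `&` c) (b `&` d).
Proof.
move=> /thetaP ab /thetaP cd; apply/thetaP => u Yu.
by rewrite !phiI (ab u Yu) (cd u Yu).
Qed.

Lemma theta_join a b c d :
  theta Y a b -> theta Y c d -> theta Y (a `|` c) (b `|` d).
Proof.
move=> /thetaP ab /thetaP cd; apply/thetaP => u Yu.
by rewrite !phiU (ab u Yu) (cd u Yu).
Qed.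

Lemma theta_compl a b : theta Y a b -> theta Y (~` a) (~` b).
Proof. by move=> /thetaP ab; apply/thetaP => u Yu; rewrite !phiC (ab u Yu). Qed.

Lemma theta_homo (f : A -> A) :
  (forall a b, theta Y a b -> forall u, Y u -> phi (f a) u -> phi (f b) u) ->
  forall a b, theta Y a b -> theta Y (f a) (f b).
Proof.
move=> fab a b ab; apply/thetaP => u Yu.
by split; apply: fab Yu => //; exact: theta_sym.
Qed.

Lemma theta_meet_r a g : (forall u, Y u -> phi g u) -> theta Y a (a `&` g).
Proof.
move=> Yg; apply/thetaP => u Yu; rewrite phiI.
by split=> [ua|[]//]; split=> //; exact: Yg.
Qed.

End Theta.

Section Conditional.
Context {disp : Order.disp_t} {A : ctbDistrLatticeType disp}.
Variable imp : A -> A -> A.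
Hypothesis imp_cond : conditional_algebra imp.
Implicit Types (F G : set A) (a b c : A) (x y : @Ul disp A).

Lemma imp_monotone_r a b c : b <= c -> imp a b <= imp a c.
Proof. by case: imp_cond => _ impI _ bc; rewrite -(meet_l bc) -impI leIr. Qed.

Lemma imp_antitone_l a b c : a <= b -> imp b c <= imp a c.
Proof.
case: imp_cond => _ _ impU ab.
by have := impU a b c; rewrite (join_r ab) lexI => /andP[].
Qed.

Lemma Dimp_filter x F : is_filter F -> is_filter (Dimp imp x F).
Proof.
case: imp_cond => impT impI _ [FT Fup FI]; split.
- by exists \top; rewrite // /phi impT; exact: phi_top.
- move=> a b [c Fc xca] ab; exists c => //.
  by apply: phi_le xca; exact: imp_monotone_r.
- move=> a b [c Fc xca] [d Fd xdb]; exists (c `&` d); first exact: FI.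
  rewrite -impI; apply/phiI; split.
    by apply: phi_le xca; apply: imp_antitone_l; exact: leIl.
  by apply: phi_le xdb; apply: imp_antitone_l; exact: leIr.
Qed.

Lemma Dimp_principal x b c :
  Dimp imp x (principal_filter b) c -> phi (imp b c) x.
Proof. by case=> a ba; apply: phi_le; exact: imp_antitone_l. Qed.

Lemma ex_TA_successor x b c :
  ~ phi (imp b c) x ->
  exists2 y, (forall e, Dimp imp x (principal_filter b) e -> phi e y)
           & ~ phi c y.
Proof.
move=> nxbc.
have fD := Dimp_filter x (principal_filter_filter b).
by apply: (ultrafilter_separation fD); move/Dimp_principal.
Qed.

(* phiF reflects inclusion of filters, so a filter maximal for
   [Dimp imp x M `<=` y] has a closed set minimal in C(x, y). *)
Lemma ex_minimal_C x y b :
  (forall e, Dimp imp x (principal_filter b) e -> phi e y) ->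
  exists M, [/\ is_filter M, M b, forall e, Dimp imp x M e -> phi e y
              & minimal_C imp x y (phiF M)].
Proof.
move=> yD.
pose Q X := is_filter X /\ forall e, Dimp imp x X e -> phi e y.
have Qb : Q (principal_filter b) by split=> //; exact: principal_filter_filter.
have [|M [[fM yM] bM Mmax]] := ex_maximal_above Qb.
  move=> C CQ Ctot Cne; split.
    by apply: bigcup_chain_filter => // X /CQ [].
  by move=> e [a [X CX Xa] xae]; case: (CQ X CX) => _; apply; exists a.
exists M; split=> //; first exact/bM/lexx.
split=> [|Z' [_ [F [fF eqZ' yF]]] Z'M]; first by split; exists M.
have MF : M `<=` F by apply: subU_phiF => // u /eqZ'/Z'M.
have FM : F `<=` M by apply: Mmax.
by move=> u; rewrite eqZ'; split=> Mu a ?; apply: Mu; [exact: MF|exact: FM].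
Qed.

Lemma TA_closed_witness Y x b c :
  TA_closed imp Y -> Y x -> ~ phi (imp b c) x ->
  exists2 y, ~ phi c y &
    exists M, [/\ is_filter M, M b, subU (phiF M) Y, Y y
                & forall e, Dimp imp x M e -> phi e y].
Proof.
move=> [_ TAY] Yx nxbc.
have [y yD nyc] := ex_TA_successor nxbc.
have [M [fM Mb yM minM]] := ex_minimal_C yD.
have [MY Yy] := TAY x y _ Yx minM.
by exists y => //; exists M.
Qed.

Lemma TA_closed_theta_imp_l Y c :
  TA_closed imp Y -> forall a b, theta Y a b -> theta Y (imp a c) (imp b c).
Proof.
move=> TAY; apply: theta_homo => a b /thetaP ab x Yx xac.
apply: contrapT => nxbc.
have [y nyc [M [fM Mb MY _ yM]]] := TA_closed_witness TAY Yx nxbc.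
apply/nyc/yM; exists a => //.
by apply: phiF_sub_phi fM _ => u Mu; apply/(ab u (MY u Mu))/Mu.
Qed.

Lemma TA_closed_theta_imp_r Y a :
  TA_closed imp Y -> forall c d, theta Y c d -> theta Y (imp a c) (imp a d).
Proof.
move=> TAY; apply: theta_homo => c d /thetaP cd x Yx xac.
apply: contrapT => nxad.
have [y nyd [M [_ Ma _ Yy yM]]] := TA_closed_witness TAY Yx nxad.
by apply/nyd/(cd y Yy)/yM; exists a.
Qed.

Section Congruence.
Variables (Y : @Uset disp A) (G : set A).
Hypotheses (fG : is_filter G) (YG : eqU Y (phiF G)).
Hypothesis imp_theta :
  forall a b c d, theta Y a b -> theta Y c d -> theta Y (imp a c) (imp b d).

Let Y_phi g : G g -> forall u, Y u -> phi g u.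
Proof. by move=> Gg u /YG; apply. Qed.

Lemma congruence_TA_succ x Z y : Y x -> TA imp x Z y -> Y y.
Proof.
move=> Yx [F [fF _ yF]]; apply/YG => g Gg.
have topg : theta Y \top g.
  by have := theta_meet_r \top (Y_phi Gg); rewrite meet1x.
have := imp_theta (theta_refl Y \top) topg.
case: imp_cond => impT _ _; rewrite impT => /thetaP xg.
by apply: yF; exists \top; [case: fF|apply/(xg x Yx)/phi_top].
Qed.

Lemma congruence_minimal_C_sub x y Z : Y x -> minimal_C imp x y Z -> subU Z Y.
Proof.
move=> Yx [[_ [F [fF eqZ yF]]] minZ].
pose FG := filter_join F G.
have fFG : is_filter FG := filter_join_filter fF fG.
have CFG : Cset imp x y (phiF FG).
  split; first by exists FG.
  exists FG; split=> // e [a [f [g [Ff Gg fga]]] xae].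
  apply: yF; exists f => //.
  have /thetaP fge := imp_theta (theta_meet_r f (Y_phi Gg)) (theta_refl Y e).
  by apply/(fge x Yx); apply: phi_le xae; exact: imp_antitone_l.
have FGZ : subU (phiF FG) Z.
  by move=> u FGu; apply/eqZ => f Ff; apply: FGu; exact: filter_join_l.
move=> u /(minZ _ CFG FGZ) FGu.
by apply/YG => g Gg; apply: FGu; exact: filter_join_r.
Qed.

End Congruence.

End Conditional.

Theorem theorem8p3 (disp : Order.disp_t) (A : ctbDistrLatticeType disp)
  (imp : A -> A -> A) (Y : @Uset disp A) :
  conditional_algebra imp -> closedU Y ->
  (congruence imp (theta Y) <-> TA_closed imp Y).
Proof.
move=> imp_cond [G [fG YG]]; split.
- move=> [_ [_ [_ [_ [_ [_ imp_theta]]]]]]; split; first by exists G.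
  move=> x y Z Yx minZ; split.
    exact: (congruence_minimal_C_sub imp_cond fG YG imp_theta Yx minZ).
  case: minZ => -[_ xZy] _.
  exact: (congruence_TA_succ imp_cond YG imp_theta Yx xZy).
- move=> TAY; split; first exact: theta_refl.
  split; first exact: theta_sym.
  split; first exact: theta_trans.
  split; first exact: theta_meet.
  split; first exact: theta_join.
  split; first exact: theta_compl.
  move=> a b c d ab cd.
  apply: (theta_trans (TA_closed_theta_imp_l imp_cond _ TAY ab)).
  exact: (TA_closed_theta_imp_r imp_cond _ TAY cd).
Qed.
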